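(* Let $D\ge1$, let $Q_D$ be the $D$-dimensional hypercube on $X=\{0,1\}^D$ with adjacency matrix $A$. For $1\le i<j\le D$ put $B_{ij}=\alpha^*_iA\alpha^*_j-\alpha^*_jA\alpha^*_i$, and let $1\le \ell\le D$. (i) If $\ell=i$ or $\ell=j$, then $B_{ij}\alpha_\ell=-\alpha_\ell B_{ij}$. (ii) If $\ell\ne i$ and $\ell\ne j$, then $B_{ij}\alpha_\ell=\alpha_\ell B_{ij}$.
   Context: $Q_D$ is the graph with vertex set $X=\{0,1\}^D$, two vertices adjacent iff they differ in exactly one coordinate. Matrices are real with rows and columns indexed by $X$. For $1\le i\le D$, $\alpha_i$ has $(x,y)$-entry $1$ if $x,y$ differ in the $i$-th coordinate and agree in all others, and $0$ otherwise; $\alpha^*_i$ is the diagonal matrix with $(x,x)$-entry $1$ if $x_i=0$ and $-1$ if $x_i=1$. *)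

From mathcomp Require Import all_boot all_order all_algebra.
From mathcomp Require Import reals.
Set Implicit Arguments. Unset Strict Implicit. Unset Printing Implicit Defensive.
Import GRing.Theory Num.Theory.
Local Open Scope ring_scope.

(* Vertex set X = {0,1}^D, coordinates indexed by 'I_D (coordinate i+1 of the
   paper is index i : 'I_D here). *)
Definition cube (D : nat) : finType := {ffun 'I_D -> bool}.

(* Real matrices with rows and columns indexed by X, via the enumeration of X. *)
Notation Xmat R D := 'M[R]_#|cube D|.

Definition xv D (k : 'I_#|cube D|) : cube D := enum_val k.

Definition cube_adj D (x y : cube D) : bool := #|[set k | x k != y k]| == 1%N.

Definition adjA (R : realType) D : Xmat R D :=
  \matrix_(a, b) (cube_adj (xv a) (xv b))%:R.

Definition alpha (R : realType) D (i : 'I_D) : Xmat R D :=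
  \matrix_(a, b) ([forall k, (xv a k != xv b k) == (k == i)])%:R.

(* alpha*_i : diagonal, entry 1 if x_i = 0 (false), -1 if x_i = 1 (true) *)
Definition alpha_star (R : realType) D (i : 'I_D) : Xmat R D :=
  \matrix_(a, b) (if a == b then (if xv a i then -1 else 1) else 0).

Definition Bmat (R : realType) D (i j : 'I_D) : Xmat R D :=
  alpha_star R i *m adjA R D *m alpha_star R j
  - alpha_star R j *m adjA R D *m alpha_star R i.

From mathcomp Require Import all_boot all_order all_algebra.
From mathcomp Require Import reals.
Local Open Scope ring_scope.
Import GRing.Theory.

(* alpha_l is the permutation matrix of the involution of X flipping coordinate l.
   This involution is an automorphism of Q_D, so alpha_l commutes with A, and it
   changes the sign of x_m exactly when m = l, so alpha*_m alpha_l = +- alpha_l alpha*_m.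
   Hence alpha*_i A alpha*_j alpha_l = (-1)^([i = l] + [j = l]) alpha_l alpha*_i A alpha*_j,
   with the same sign for both terms of B_ij. *)

Section HypercubeFlips.
Variables (R : realType) (D : nat).

Definition flip (l : 'I_D) (x : cube D) : cube D :=
  [ffun k => if k == l then ~~ x k else x k].

Lemma flipK l : involutive (flip l).
Proof. by move=> x; apply/ffunP => k; rewrite !ffunE; case: (k == l); rewrite ?negbK. Qed.

Lemma cube_adj_flip l (x y : cube D) : cube_adj x (flip l y) = cube_adj (flip l x) y.
Proof.
rewrite /cube_adj; congr (#|pred_of_set _| == 1)%N.
apply/finset.setP => k; rewrite !inE !ffunE.
by case: (k == l); case: (x k); case: (y k).
Qed.

Definition flip_idx (l : 'I_D) (a : 'I_#|cube D|) : 'I_#|cube D| :=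
  enum_rank (flip l (xv a)).

Lemma flip_idxK l : involutive (flip_idx l).
Proof. by move=> a; rewrite /flip_idx /xv enum_rankK flipK enum_valK. Qed.

Lemma alphaE l a b : alpha R l a b = (b == flip_idx l a)%:R.
Proof.
rewrite mxE; congr (_%:R); congr (nat_of_bool _); apply/fintype.forallP/eqP.
  move=> diff_l; apply: enum_val_inj; rewrite /flip_idx enum_rankK; apply/ffunP => k.
  rewrite ffunE; move: (diff_l k); rewrite /xv.
  by case: (k == l); case: (enum_val a k); case: (enum_val b k).
move=> -> k; rewrite /flip_idx /xv enum_rankK ffunE.
by case: (k == l); case: (enum_val a k).
Qed.

Lemma mulmx_alpha (M : Xmat R D) l a b : (M *m alpha R l) a b = M a (flip_idx l b).
Proof.
rewrite mxE (bigD1 (flip_idx l b)) //= alphaE flip_idxK eqxx mulr1 big1 ?addr0 //.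
move=> c c_neq; rewrite alphaE; have [b_eq|_] := eqP; last by rewrite mulr0.
by rewrite b_eq flip_idxK eqxx in c_neq.
Qed.

Lemma alpha_mulmx (M : Xmat R D) l a b : (alpha R l *m M) a b = M (flip_idx l a) b.
Proof.
rewrite mxE (bigD1 (flip_idx l a)) //= alphaE eqxx mul1r big1 ?addr0 // => c c_neq.
by rewrite alphaE (negbTE c_neq) mul0r.
Qed.

Lemma comm_adjA_alpha l : comm_mx (adjA R D) (alpha R l).
Proof.
apply/matrixP => a b; rewrite mulmx_alpha alpha_mulmx !mxE /flip_idx /xv !enum_rankK.
by rewrite cube_adj_flip.
Qed.

Lemma alpha_star_alpha (m l : 'I_D) :
  alpha_star R m *m alpha R l = (-1) ^+ (m == l) *: (alpha R l *m alpha_star R m).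
Proof.
apply/matrixP => a b; rewrite mulmx_alpha [RHS]mxE alpha_mulmx !mxE.
rewrite (_ : (a == flip_idx l b) = (flip_idx l a == b)); last first.
  by apply/eqP/eqP => [->|<-]; rewrite flip_idxK.
have [_|_] := eqP; last by rewrite mulr0.
rewrite /flip_idx /xv enum_rankK ffunE.
by case: (m == l); case: (enum_val a m); rewrite ?mul1r ?mulN1r ?opprK.
Qed.

Lemma star_adj_star_alpha (m n l : 'I_D) :
  alpha_star R m *m adjA R D *m alpha_star R n *m alpha R l =
  (-1) ^+ ((m == l) (+) (n == l)) *:
    (alpha R l *m (alpha_star R m *m adjA R D *m alpha_star R n)).
Proof.
rewrite -mulmxA alpha_star_alpha -scalemxAr (mulmxA _ (alpha R l)).
rewrite -(mulmxA (alpha_star R m)) comm_adjA_alpha mulmxA alpha_star_alpha.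
by rewrite -!scalemxAl scalerA -signr_addb addbC !mulmxA.
Qed.

Lemma Bmat_alpha (i j l : 'I_D) :
  Bmat R i j *m alpha R l =
  (-1) ^+ ((i == l) (+) (j == l)) *: (alpha R l *m Bmat R i j).
Proof.
rewrite /Bmat mulmxBl mulmxBr !star_adj_star_alpha scalerBr.
by rewrite [(j == l) (+) _]addbC.
Qed.

End HypercubeFlips.

Theorem lemma9p4 (R : realType) (D : nat) (i j l : 'I_D) :
  (1 <= D)%N -> (i < j)%N ->
  ((l = i \/ l = j) ->
     Bmat R i j *m alpha R l = - (alpha R l *m Bmat R i j)) /\
  ((l <> i /\ l <> j) ->
     Bmat R i j *m alpha R l = alpha R l *m Bmat R i j).
Proof.
move=> _ lt_ij; have neq_ij : i != j by rewrite neq_ltn lt_ij.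
rewrite Bmat_alpha; split.
  by case=> ->; rewrite eqxx ?[j == i]eq_sym (negbTE neq_ij) scaleN1r.
case=> /eqP neq_li /eqP neq_lj.
by rewrite !(eq_sym _ l) (negbTE neq_li) (negbTE neq_lj) scale1r.
Qed.
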